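(* Let $D$ be an $m\times m$ differential matrix over a field and let $B_1,B_2$ be $m\times m$ triangular matrices. If both $\underline D_1=B_1^{-1}DB_1$ and $\underline D_2=B_2^{-1}DB_2$ are almost-Jordan, then $\underline D_1=\underline D_2$.
   Context: A differential matrix is a square matrix $D$ with $D^2=0$. A square matrix is triangular if it is upper-triangular and invertible. A differential matrix is Jordan if it is block-diagonal with each diagonal block equal to $[0]$ or $\begin{bmatrix}0&1\\0&0\end{bmatrix}$; it is almost-Jordan if $P^{-1}\underline DP$ is Jordan for some permutation matrix $P$. *)

From HB Require Import structures.
From mathcomp Require Import all_boot all_order all_algebra all_fingroup.
Set Implicit Arguments. Unset Strict Implicit. Unset Printing Implicit Defensive.
Import GRing.Theory.
Local Open Scope ring_scope.

Definition differential (F : fieldType) (m : nat) (D : 'M[F]_m) : Prop :=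
  D *m D = 0.

Definition triangular (F : fieldType) (m : nat) (B : 'M[F]_m) : Prop :=
  (forall i j : 'I_m, (j < i)%N -> B i j = 0) /\ B \in unitmx.

(* Entry pattern (as a boolean "is this entry 1") of the block-diagonal
   matrix whose diagonal blocks have sizes given by s (read left to right);
   a block of size 1 is [0], a block of size 2 is [[0,1],[0,0]]. *)
Fixpoint jordan_entry (s : seq nat) (i j : nat) : bool :=
  match s with
  | [::] => false
  | k :: s' =>
      if (i < k)%N && (j < k)%N then [&& k == 2%N, i == 0%N & j == 1%N]
      else if (k <= i)%N && (k <= j)%N then jordan_entry s' (i - k) (j - k)
      else false
  end.

Definition jordan (F : fieldType) (m : nat) (A : 'M[F]_m) : Prop :=
  exists s : seq nat,
    [/\ all (fun k => (k == 1%N) || (k == 2%N)) s, sumn s = m &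
        forall i j : 'I_m, A i j = (jordan_entry s i j)%:R].

Definition almost_jordan (F : fieldType) (m : nat) (A : 'M[F]_m) : Prop :=
  exists p : 'S_m, jordan (invmx (perm_mx p) *m A *m perm_mx p).

(** Both conjugates are partial permutation matrices (entries 0 or 1, at most
    one 1 in each row and column), and they are conjugate to each other by the
    upper-triangular matrix [B1^-1 B2].  Multiplying on the left and on the
    right by upper-triangular matrices cannot increase the rank of any lower-left
    corner (rows [>= i], columns [< j]), so the two conjugates have the same
    corner ranks.  For a partial permutation matrix the corner rank counts the
    nonzero entries of the corner, and entry [(i, j)] is recovered from four
    such counts by inclusion-exclusion. *)

From HB Require Import structures.
From mathcomp Require Import all_boot all_order all_algebra all_fingroup.
Set Implicit Arguments. Unset Strict Implicit. Unset Printing Implicit Defensive.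
Import GRing.Theory.
Local Open Scope ring_scope.

Section UpperTriangular.

Variables (F : fieldType) (m : nat).
Implicit Types B C : 'M[F]_m.

Definition upper_trig B := forall i j : 'I_m, (j < i)%N -> B i j = 0.

Lemma upper_trig_mul B C : upper_trig B -> upper_trig C -> upper_trig (B *m C).
Proof.
move=> uB uC i j ji; rewrite mxE big1 // => t _.
case: (ltnP t i) => [ti | it]; first by rewrite uB ?mul0r.
by rewrite uC ?mulr0 // (leq_trans ji it).
Qed.

Lemma upper_trig_diag_neq0 B : upper_trig B -> B \in unitmx -> forall i, B i i != 0.
Proof.
move=> uB unitB i.
have trigBT : is_trig_mx B^T by apply/is_trig_mxP => k l kl; rewrite mxE uB.
move: unitB; rewrite unitmxE -det_tr det_trig // unitfE => /prodf_neq0/(_ i isT).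
by rewrite mxE.
Qed.

Lemma upper_trig_inv B : upper_trig B -> B \in unitmx -> upper_trig (invmx B).
Proof.
move=> uB unitB k; have diagB := upper_trig_diag_neq0 uB unitB.
suff below : forall n (l : 'I_m), (l < n)%N -> (l < k)%N -> invmx B k l = 0.
  by move=> l; apply: below (ltnSn l).
elim=> [//| n IHn] l; rewrite ltnS leq_eqVlt => /orP[/eqP ln | ]; last exact: IHn.
move=> lk; have : (invmx B *m B) k l = 0.
  by rewrite mulVmx // mxE; case: eqP => // kl; rewrite kl ltnn in lk.
rewrite mxE (bigD1 l) //= big1 ?addr0 => [/eqP | t tl].
  by rewrite mulf_eq0 (negbTE (diagB l)) orbF => /eqP.
case: (ltngtP t l) => [tl' | lt | /val_inj tE]; last by rewrite tE eqxx in tl.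
- by rewrite IHn ?mul0r -?ln // (ltn_trans tl' lk).
- by rewrite uB ?mulr0.
Qed.

End UpperTriangular.

Section SelectionMatrices.

Variables (F : fieldType) (m : nat).

Definition sel_mx r (a : 'I_r -> 'I_m) : 'M[F]_(m, r) :=
  \matrix_(k, t) (a t == k)%:R.

Lemma sel_mx_trK r (a : 'I_r -> 'I_m) :
  injective a -> (sel_mx a)^T *m sel_mx a = 1%:M.
Proof.
move=> inj_a; apply/matrixP => t t'; rewrite !mxE (bigD1 (a t)) //= !mxE eqxx mul1r.
rewrite big1 ?addr0 => [| k /negbTE ak]; last by rewrite !mxE eq_sym ak mul0r.
by rewrite (inj_eq inj_a) eq_sym.
Qed.

End SelectionMatrices.

Lemma rank_sel_mx_mul (F : fieldType) m n r (a : 'I_r -> 'I_m) (b : 'I_r -> 'I_n) :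
  injective a -> injective b -> \rank (sel_mx F a *m (sel_mx F b)^T) = r.
Proof.
have free p (c : 'I_r -> 'I_p) : injective c -> row_free (sel_mx F c)^T.
  by move=> inj_c; apply/row_freeP; exists (sel_mx F c); apply: sel_mx_trK.
move=> /free free_a /free free_b.
by rewrite mxrankMfree // -mxrank_tr; apply/eqP.
Qed.

Section PartialPermutationMatrices.

Variables (F : fieldType) (m n : nat).
Implicit Types A : 'M[F]_(m, n).

Definition partial_perm_mx A :=
  [/\ forall k l, A k l = 0 \/ A k l = 1,
      forall k l l', A k l != 0 -> A k l' != 0 -> l = l' &
      forall k k' l, A k l != 0 -> A k' l != 0 -> k = k'].

Definition nnz A : nat := #|[set kl | A kl.1 kl.2 != 0]|.

Lemma nnzE A : nnz A = (\sum_k \sum_l ((A k l != 0%R) : nat))%N.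
Proof.
rewrite /nnz -sum1dep_card pair_big big_mkcond /=.
by apply: eq_bigr => kl _; case: (A kl.1 kl.2 != 0).
Qed.

Lemma rank_partial_perm_mx A :
  partial_perm_mx A -> \rank A = nnz A.
Proof.
move=> [A01 uniq_row uniq_col]; set S := [set kl | A kl.1 kl.2 != 0].
pose e (t : 'I_#|S|) := enum_val t.
have eS t : A (e t).1 (e t).2 != 0 by have := enum_valP t; rewrite inE.
have eE t : e t = ((e t).1, (e t).2) by case: (e t).
have inj_row : injective (fun t => (e t).1).
  move=> t t' /= same_row; apply: enum_val_inj.
  rewrite -/(e t) -/(e t') eE [e t']eE same_row.
  by congr pair; apply: (uniq_row (e t').1); [rewrite -same_row | ]; apply: eS.
have inj_col : injective (fun t => (e t).2).
  move=> t t' /= same_col; apply: enum_val_inj.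
  rewrite -/(e t) -/(e t') eE [e t']eE same_col.
  by congr pair; apply: (uniq_col _ _ (e t').2); [rewrite -same_col | ]; apply: eS.
suff A_sel : A = sel_mx F (fun t => (e t).1) *m (sel_mx F (fun t => (e t).2))^T.
  by rewrite {1}A_sel rank_sel_mx_mul.
apply/matrixP => k l; rewrite !mxE.
under eq_bigr do rewrite !mxE -natrM mulnb -xpair_eqE -eE.
have [klS | klNS] := boolP ((k, l) \in S).
- rewrite (bigD1 (enum_rank_in klS (k, l))) //= /e enum_rankK_in // eqxx big1 ?addr0.
    by case: (A01 k l) => // A0; move: klS; rewrite inE A0 eqxx.
  move=> t /negbTE neq_t; case: eqP => // et.
  by move: neq_t; rewrite -{2}et enum_valK_in eqxx.
- rewrite big1 => [| t _]; last by case: eqP => // et; rewrite -et enum_valP in klNS.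
  by case: (A01 k l) => // A1; move: klNS; rewrite inE A1 oner_eq0.
Qed.

End PartialPermutationMatrices.

Section Corners.

Variables (F : fieldType) (m : nat).
Implicit Types (A U V : 'M[F]_m) (i j : nat).

Definition low_rows i : 'M[F]_m := diag_mx (\row_k (i <= k)%N%:R).
Definition left_cols j : 'M[F]_m := diag_mx (\row_l (l < j)%N%:R).

Definition corner A i j := low_rows i *m A *m left_cols j.

Lemma corner_entry A i j k l :
  corner A i j k l = if (i <= k)%N && (l < j)%N then A k l else 0.
Proof.
rewrite /corner mul_mx_diag mul_diag_mx !mxE.
by case: (i <= k)%N; case: (l < j)%N; rewrite ?mul1r ?mulr1 ?mul0r ?mulr0.
Qed.

Lemma partial_perm_corner A i j : partial_perm_mx A -> partial_perm_mx (corner A i j).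
Proof.
move=> [A01 uniq_row uniq_col]; split=> [k l | k l l' | k k' l]; rewrite !corner_entry.
- by case: ifP => _; [apply: A01 | left].
- by do 2 case: ifP => _; rewrite ?eqxx //; apply: uniq_row.
- by do 2 case: ifP => _; rewrite ?eqxx //; apply: uniq_col.
Qed.

Lemma low_rows_upper_trig U i :
  upper_trig U -> low_rows i *m U *m low_rows i = low_rows i *m U.
Proof.
move=> uU; apply/matrixP => k l; rewrite /low_rows mul_mx_diag !mul_diag_mx !mxE.
case: (leqP i k) => ik; case: (leqP i l) => il; rewrite ?mul1r ?mulr1 ?mul0r //.
by rewrite uU ?mul0r // (leq_trans il ik).
Qed.

Lemma left_cols_upper_trig V j :
  upper_trig V -> left_cols j *m (V *m left_cols j) = V *m left_cols j.
Proof.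
move=> uV; apply/matrixP => k l; rewrite /left_cols !mul_mx_diag mul_diag_mx !mxE.
case: (ltnP k j) => kj; case: (ltnP l j) => lj; rewrite ?mul1r ?mulr1 ?mul0r ?mulr0 //.
by rewrite uV // (leq_trans lj kj).
Qed.

Lemma corner_upper_trig_mull U A i j :
  upper_trig U -> corner (U *m A) i j = low_rows i *m U *m corner A i j.
Proof. by move=> uU; rewrite /corner !mulmxA low_rows_upper_trig. Qed.

Lemma corner_upper_trig_mulr A V i j :
  upper_trig V -> corner (A *m V) i j = corner A i j *m (V *m left_cols j).
Proof. by move=> uV; rewrite /corner -!mulmxA left_cols_upper_trig. Qed.

Lemma rank_corner_upper_trig_mul U A V i j :
  upper_trig U -> upper_trig V ->
  (\rank (corner (U *m A *m V) i j) <= \rank (corner A i j))%N.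
Proof.
move=> uU uV; rewrite -mulmxA corner_upper_trig_mull // corner_upper_trig_mulr //.
by apply: leq_trans (mxrankM_maxr _ _) _; apply: mxrankM_maxl.
Qed.

Lemma nnz_cornerE A i j :
  nnz (corner A i j) =
  (\sum_(k < m) \sum_(l < m) ([&& i <= k, l < j & A k l != 0%R] : nat))%N.
Proof.
rewrite nnzE; apply: eq_bigr => k _; apply: eq_bigr => l _.
by rewrite corner_entry; case: (i <= k)%N; case: (l < j)%N; rewrite /= ?eqxx.
Qed.

Lemma nnz_corner_incl_excl A (i j : 'I_m) :
  (nnz (corner A i j.+1) + nnz (corner A i.+1 j) =
   nnz (corner A i j) + nnz (corner A i.+1 j.+1) + (A i j != 0%R))%N.
Proof.
have entry_ij : (A i j != 0%R : nat) =
    (\sum_k \sum_l ([&& k == i, l == j & A k l != 0%R] : nat))%N.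
  rewrite (bigD1 i) //= [X in (_ + X)%N]big1 => [| k /negbTE ->]; last exact: big1.
  rewrite addn0 (bigD1 j) //= [X in (_ + X)%N]big1 => [| l /negbTE ->].
    by rewrite !eqxx addn0.
  by rewrite andbF.
rewrite entry_ij !nnz_cornerE -!big_split; apply: eq_bigr => k _.
rewrite -!big_split; apply: eq_bigr => l _ /=.
rewrite ltnS -!val_eqE /=.
by case: (ltngtP i k); case: (ltngtP l j); case: (A k l != 0).
Qed.

Lemma partial_perm_mx_eq_corner_rank A A' :
  partial_perm_mx A -> partial_perm_mx A' ->
  (forall i j, \rank (corner A i j) = \rank (corner A' i j)) -> A = A'.
Proof.
move=> ppA ppA' eq_rank.
have eq_nnz i j : nnz (corner A i j) = nnz (corner A' i j).
  by rewrite -!rank_partial_perm_mx ?eq_rank //; apply: partial_perm_corner.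
apply/matrixP => k l; have := nnz_corner_incl_excl A k l.
rewrite !eq_nnz nnz_corner_incl_excl => /addnI same_support.
case: ppA ppA' => [A01 _ _] [A'01 _ _].
by case: (A01 k l) (A'01 k l) same_support => -> [] ->; rewrite ?eqxx ?oner_eq0.
Qed.

End Corners.

Lemma jordan_entry_succ s i j : jordan_entry s i j -> j = i.+1.
Proof.
elim: s i j => [//| k s IHs] i j /=.
case: ifP => [_ | _]; first by case/and3P => _ /eqP-> /eqP->.
case: ifP => [/andP[ki kj] /IHs ji | //].
by rewrite -(subnK kj) ji addSn subnK.
Qed.

Lemma jordan_partial_perm_mx (F : fieldType) m (J : 'M[F]_m) :
  jordan J -> partial_perm_mx J.
Proof.
case=> s [_ _ J_entry].
have J_succ k l : J k l != 0 -> (l : nat) = k.+1.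
  rewrite J_entry; case J_kl: (jordan_entry s k l); last by rewrite eqxx.
  by move=> _; apply: (@jordan_entry_succ s); rewrite J_kl.
split=> [k l | k l l' /J_succ kl /J_succ kl' | k k' l /J_succ kl /J_succ k'l].
- by rewrite J_entry; case: (jordan_entry s k l); [right | left].
- by apply: val_inj; rewrite /= kl kl'.
- by apply/val_inj/eqP; rewrite /= -eqSS -kl -k'l.
Qed.

Lemma invmx_perm_mx (F : fieldType) m (p : 'S_m) :
  invmx (perm_mx p) = perm_mx p^-1 :> 'M[F]_m.
Proof.
rewrite -[LHS]mulmx1 -(@perm_mx1 F m) -(mulgV p) perm_mxM mulmxA.
by rewrite mulVmx ?mul1mx // unitmx_perm.
Qed.

Lemma almost_jordan_partial_perm_mx (F : fieldType) m (A : 'M[F]_m) :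
  almost_jordan A -> partial_perm_mx A.
Proof.
case=> p /jordan_partial_perm_mx [J01 uniq_row uniq_col].
have A_entry k l : A k l = (invmx (perm_mx p) *m A *m perm_mx p) (p k) (p l).
  by rewrite invmx_perm_mx -row_permE -{2}(invgK p) -col_permE !mxE !permK.
split=> [k l | k l l' | k k' l]; rewrite !A_entry.
- exact: J01.
- by move=> /uniq_row /[apply] /perm_inj.
- by move=> /uniq_col /[apply] /perm_inj.
Qed.

Unset Implicit Arguments.

Theorem corollaryA3 (F : fieldType) (m : nat) (D B1 B2 : 'M[F]_m) :
  differential D -> triangular B1 -> triangular B2 ->
  almost_jordan (invmx B1 *m D *m B1) ->
  almost_jordan (invmx B2 *m D *m B2) ->
  invmx B1 *m D *m B1 = invmx B2 *m D *m B2.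
Proof.
move=> _ [uB1 unitB1] [uB2 unitB2] /almost_jordan_partial_perm_mx pp1.
move=> /almost_jordan_partial_perm_mx pp2.
apply: (partial_perm_mx_eq_corner_rank pp1 pp2) => i j.
have uB12 := upper_trig_mul (upper_trig_inv uB1 unitB1) uB2.
have uB21 := upper_trig_mul (upper_trig_inv uB2 unitB2) uB1.
have conj12 : invmx B2 *m D *m B2 =
    (invmx B2 *m B1) *m (invmx B1 *m D *m B1) *m (invmx B1 *m B2).
  by rewrite !mulmxA !(mulmxK unitB1).
have conj21 : invmx B1 *m D *m B1 =
    (invmx B1 *m B2) *m (invmx B2 *m D *m B2) *m (invmx B2 *m B1).
  by rewrite !mulmxA !(mulmxK unitB2).
apply/eqP; rewrite eqn_leq; apply/andP; split.
- by rewrite {1}conj21 rank_corner_upper_trig_mul.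
- by rewrite {1}conj12 rank_corner_upper_trig_mul.
Qed.
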